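(* Under the assumptions of the approximation theorem (open convex $\mathcal D$, $K\in\mathbb{Z}_{\ge2}$, each $L^{(n)}$ is $2K$ times continuously differentiable on $\mathcal D$ with derivatives up to order $2K$ bounded uniformly in $n$), there is a constant $C$ (depending on $K$, $\beta$ and the derivative bounds only) such that for all $\theta\in\mathcal D$, all $m\in[1,K]$, all $r\in[0,2K-m]$, all $n\ge0$ and all $a\in[1,n]$: $$\|\nabla^rc_m^{(n)}(\theta)\|\le C,\qquad\|\nabla^rp_m^{(n,a)}(\theta)\|\le C\,a^m.$$
   Context: Fix $\beta\in(0,1)$. $[a,b]$ denotes $[a,b]\cap\mathbb{Z}$; empty sums are $0$. $\nabla^kF(\theta)$ is the $k$-th derivative (symmetric $k$-linear map), $\nabla^0F=F$, and $[u_1^{\times r_1},\dots]$ means $u_1$ repeated $r_1$ times, etc. For integers $i,l\ge0$, $\mathcal K_{i,l}:=\{(k_0,\dots,k_l)\in\mathbb{Z}_{\ge0}^{l+1}:\ k_0+\dots+k_l=i,\ \sum_{j=1}^l jk_j=l\}$. Given losses $L^{(s)}:\mathcal D\to\mathbb{R}$, $s\ge0$, the memoryless coefficients and history terms are defined recursively by $c_1^{(n)}(\theta)=-\sum_{k=0}^n\beta^k\nabla L^{(n-k)}(\theta)$, $$c_m^{(n)}(\theta)=-\sum_{k=1}^n\beta^k\sum_{\substack{i,l\ge0\\ i+l=m-1}}\sum_{(i_0,\dots,i_l)\in\mathcal K_{i,l}}\frac{1}{i_0!\cdots i_l!}\nabla^{i+1}L^{(n-k)}(\theta)\big[p_1^{(n,k)}(\theta)^{\times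 i_0},\dots,p_{l+1}^{(n,k)}(\theta)^{\times i_l}\big],\ m\ge2,$$ $$p_m^{(n,a)}(\theta)=-\sum_{s=1}^a\sum_{\substack{j\ge1,\,i,l\ge0\\ i+j+l=m}}\sum_{(k_0,\dots,k_l)\in\mathcal K_{i,l}}\frac{1}{k_0!\cdots k_l!}\nabla^{i}c_j^{(n-s)}(\theta)\big[p_1^{(n,s)}(\theta)^{\times k_0},\dots,p_{l+1}^{(n,s)}(\theta)^{\times k_l}\big]$$ for $m\ge1$, $a\in[1,n]$. *)

From HB Require Import structures.
From mathcomp Require Import all_boot all_order all_algebra.
From mathcomp Require Import all_classical all_reals all_analysis.
Set Implicit Arguments.
Unset Strict Implicit.
Unset Printing Implicit Defensive.
Import Order.TTheory GRing.Theory Num.Theory.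
Import numFieldNormedType.Exports.
Local Open Scope classical_set_scope.
Local Open Scope ring_scope.

Section Defs.
Variable R : realType.
Variable d : nat.
Notation V := 'rV[R]_d.

(* Iterated directional derivative:
   dirDer [:: u1; ...; uk] F theta = D_{u1} ... D_{uk} F (theta),
   i.e. nabla^k F(theta)[u1,...,uk] for a C^k function F. *)
Fixpoint dirDer (W : normedModType R) (us : seq V) (f : V -> W) : V -> W :=
  match us with
  | [::] => f
  | u :: us' => 'D_u (dirDer us' f)
  end.

Definition enorm (u : V) : R := Num.sqrt (\sum_(q < d) (u ord0 q) ^+ 2).

Definition grad (f : V -> R) (theta : V) : V :=
  \row_(q < d) 'D_(delta_mx ord0 q : V) f theta.

Definition convexD (D : set V) : Prop :=
  forall x y, D x -> D y -> forall t : R, 0 <= t <= 1 ->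
    D ((1 - t) *: x + t *: y).

Definition CkOn (k : nat) (D : set V) (f : V -> R) : Prop :=
  (forall us : seq V, (size us < k)%N -> forall theta, D theta ->
      differentiable (dirDer us f) theta) /\
  (forall us : seq V, (size us <= k)%N -> forall theta, D theta ->
      {for theta, continuous (dirDer us f)}).

Definition Kset (i l : nat) : pred {ffun 'I_l.+1 -> 'I_i.+1} :=
  fun kk => ((\sum_(j < l.+1) (kk j : nat)) == i)%N &&
            ((\sum_(j < l.+1) (j : nat) * kk j) == l)%N.

Definition kcoef (i l : nat) (kk : {ffun 'I_l.+1 -> 'I_i.+1}) : R :=
  ((\prod_(j < l.+1) (kk j)`!)%:R)^-1.

Definition dirs (i l : nat) (kk : {ffun 'I_l.+1 -> 'I_i.+1}) (P : nat -> V)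
  : seq V := flatten [seq nseq (kk j) (P (j : nat).+1) | j <- enum 'I_l.+1].

Variable beta : R.
Variable L : nat -> V -> R.

Definition c1 (n : nat) : V -> V := fun theta =>
  - \sum_(k < n.+1) (beta ^+ k) *: grad (L (n - k)%N) theta.

(* c_m^{(n)}, m >= 2, given the table P j n a = p_j^{(n,a)} *)
Definition cnext (m : nat) (P : nat -> nat -> nat -> V -> V) (n : nat)
  : V -> V := fun theta =>
  - \sum_(1 <= k < n.+1) (beta ^+ k) *:
      \sum_(i < m) \sum_(kk : {ffun 'I_(m.-1 - i)%N.+1 -> 'I_i.+1}
                           | Kset kk)
         kcoef kk *: grad (dirDer (dirs kk (fun j => P j n k theta))
                                 (L (n - k)%N)) theta.

(* p_m^{(n,a)}, given the tables C j n = c_j^{(n)} and P *)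
Definition pnext (m : nat) (C : nat -> nat -> V -> V)
  (P : nat -> nat -> nat -> V -> V) (n a : nat) : V -> V := fun theta =>
  - \sum_(1 <= s < a.+1) \sum_(1 <= j < m.+1) \sum_(i < (m - j)%N.+1)
      \sum_(kk : {ffun 'I_(m - j - i)%N.+1 -> 'I_i.+1} | Kset kk)
         kcoef kk *: dirDer (dirs kk (fun q => P q n s theta)) (C j (n - s)%N) theta.

(* stage m computes the tables of c_j, p_j for all j <= m (0 beyond);
   c_m only uses p_j with j < m, and p_m only uses c_j with j <= m and
   p_j with j < m (with nonzero multiplicity). *)
Fixpoint stage (m : nat)
  : (nat -> nat -> V -> V) * (nat -> nat -> nat -> V -> V) :=
  match m with
  | 0 => (fun _ _ _ => 0, fun _ _ _ _ => 0)
  | m'.+1 =>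
      let: (Cp, Pp) := stage m' in
      let cm := if m' == 0%N then c1 else cnext m'.+1 Pp in
      let C := fun j => if j == m'.+1 then cm else Cp j in
      let pm := pnext m'.+1 C Pp in
      (C, fun j => if j == m'.+1 then pm else Pp j)
  end.

Definition cmem (m n : nat) : V -> V := (stage m).1 m n.
Definition phist (m n a : nat) : V -> V := (stage m).2 m n a.

End Defs.

From HB Require Import structures.
From mathcomp Require Import all_boot all_order all_algebra.
From mathcomp Require Import all_classical all_reals all_analysis.
From mathcomp Require Import ring lra zify.
Import Order.TTheory GRing.Theory Num.Theory.
Import numFieldNormedType.Exports.
Local Open Scope classical_set_scope.
Local Open Scope ring_scope.
Set Implicit Arguments.
Unset Strict Implicit.

(* All estimates live in the class of
   functions on D that are N times differentiable with every derivative of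
   order <= N in unit directions bounded by B ([cbounded D N B]). The class is
   stable under sums, scalings and products (Leibniz costs 2 ^ N), and under
   differentiating along directions that are themselves vector fields of the
   class, once those are expanded in the coordinate basis. Every summand of
   c_m or p_m is of this form, with directions p_j^{(n,s)} for j < m; their
   bounds C s^j multiply over a tuple of K_{i,l} to C^i s^(m-1). For c_m the
   weights beta^k make sum_k beta^k k^(m-1) converge, for p_m the a summands
   of size a^(m-1) give a^m. Each level costs one derivative, which leaves the
   orders r <= 2K - m. *)


Section FlattenNseq.
Variables (T A : Type).

Lemma size_flatten_nseq (r : seq T) (g : T -> nat) (x : T -> A) :
  size (flatten [seq nseq (g t) (x t) | t <- r]) = (\sum_(t <- r) g t)%N.
Proof. by elim: r => [|t r IH]; rewrite ?big_nil ?big_cons //= size_cat size_nseq IH. Qed.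

Lemma map_flatten_nseq (B : Type) (h : A -> B) (r : seq T) (g : T -> nat) (x : T -> A) :
  map h (flatten [seq nseq (g t) (x t) | t <- r]) =
  flatten [seq nseq (g t) (h (x t)) | t <- r].
Proof. by elim: r => [|t r IH] //=; rewrite map_cat map_nseq IH. Qed.

Lemma prod_flatten_nseq (R : comPzRingType) (r : seq T) (g : T -> nat) (x : T -> A)
    (F : A -> R) :
  \prod_(p <- flatten [seq nseq (g t) (x t) | t <- r]) F p = \prod_(t <- r) F (x t) ^+ g t.
Proof.
elim: r => [|t r IH]; rewrite ?big_nil ?big_cons //= big_cat IH /=; congr (_ * _).
by elim: (g t) => [|n IHn]; rewrite ?big_nil //= big_cons IHn exprS.
Qed.

End FlattenNseq.

Lemma mem_flatten_nseq (T : Type) (A : eqType) (r : seq T) (g : T -> nat) (x : T -> A) p :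
  p \in flatten [seq nseq (g t) (x t) | t <- r] -> exists2 t, (0 < g t)%N & p = x t.
Proof.
elim: r => [|t r IH] //=; rewrite mem_cat => /orP[|/IH //].
by rewrite mem_nseq => /andP[g0 /eqP->]; exists t.
Qed.

Section NearDifferentiable.
Context {R : numFieldType} {V W : normedModType R}.

Lemma near0_differentiable (h : V -> W) x : (\near x, h x = 0) -> differentiable h x.
Proof.
move=> hn; apply/diffP; rewrite /diff.
set P := (fun df : {linear V -> W} => _).
suff PP : P (get P) by [].
apply: getPex; exists ('d (cst (0 : W)) x); rewrite /P; split.
  by rewrite diff_cst; exact: cst_continuous.
rewrite diff_cst lim_id /=; last exact: norm_hausdorff.
have E : h = (fun y => h x + (0 : V -> W) (y - x)) +o_ x (fun y => y - x).
  apply/eqaddoP => e e0; near=> y.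
  have -> : (h - (fun y0 : V => h x + (0 : V -> W) (y0 - x))) y = h y - (h x + 0) by [].
  rewrite (near hn y) // (nbhs_singleton hn) !addr0 subrr normr0.
  by rewrite mulr_ge0 // ltW.
by move=> y; rewrite {1}E.
Unshelve. all: by end_near.
Qed.

Lemma near_eq_differentiable (f g : V -> W) x :
  (\near x, f x = g x) -> differentiable f x -> differentiable g x.
Proof.
move=> fg df; have -> : g = f + (g - f) by apply/funext => y /=; rewrite addrC subrK.
apply: differentiableD => //; apply: near0_differentiable.
by apply: filterS fg => y fgy; rewrite -[(g - f) y]/(g y - f y) fgy subrr.
Qed.

End NearDifferentiable.

Section DirDer.
Context {R : realType} {d : nat} {W : normedModType R}.
Local Notation V := 'rV[R]_d.

Lemma dirDer_cat us vs (f : V -> W) : dirDer (us ++ vs) f = dirDer us (dirDer vs f).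
Proof. by elim: us => //= u us ->. Qed.

Lemma dirDer_rcons us u (f : V -> W) : dirDer (rcons us u) f = dirDer us ('D_u f).
Proof. by rewrite -cats1 dirDer_cat. Qed.

Lemma dirDer_cst0 us : dirDer us (fun _ : V => (0 : W)) = fun _ => 0.
Proof. by elim: us => //= u us ->; apply/funext => x; exact: derive_cst. Qed.

End DirDer.

Lemma Kset_prod (R : comPzRingType) i l (kk : {ffun 'I_l.+1 -> 'I_i.+1}) (b s : R) :
  Kset kk -> \prod_(t < l.+1) (b * s ^+ t.+1) ^+ kk t = b ^+ i * s ^+ (i + l).
Proof.
case/andP => /eqP Hi /eqP Hl.
rewrite (eq_bigr (fun t : 'I_l.+1 => b ^+ kk t * s ^+ (t.+1 * kk t)%N)); last first.
  by move=> t _; rewrite exprMn exprM.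
rewrite big_split /= !prodrXr Hi; congr (_ * _); congr (_ ^+ _).
rewrite (eq_bigr (fun t : 'I_l.+1 => (kk t + t * kk t)%N)); last by move=> t _; rewrite mulSn.
by rewrite big_split /= Hi Hl.
Qed.

Lemma Kset_gt0 i l (kk : {ffun 'I_l.+1 -> 'I_i.+1}) (t : 'I_l.+1) :
  Kset kk -> (0 < kk t)%N -> (0 < i)%N.
Proof.
move=> /andP[/eqP Hi _] kt; rewrite -Hi (bigD1 t) //=.
exact: leq_trans kt (leq_addr _ _).
Qed.

Lemma size_dirs (R : realType) d i l (kk : {ffun 'I_l.+1 -> 'I_i.+1}) (P : nat -> 'rV[R]_d) :
  Kset kk -> size (dirs kk P) = i.
Proof. by move=> /andP[/eqP Hi _]; rewrite /dirs size_flatten_nseq big_enum. Qed.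

Section KtermConst.
Variables (R : realType) (d : nat).

Definition Kterm_const N m (b BG : R) := (d%:R * 2 ^+ N * b + 1) ^+ m * (BG + 1).

Lemma Kterm_const_ge0 N m b BG : 0 <= b -> 0 <= BG -> 0 <= Kterm_const N m b BG.
Proof.
move=> b0 BG0; rewrite /Kterm_const mulr_ge0 ?addr_ge0 // exprn_ge0 // addr_ge0 //.
by rewrite !mulr_ge0 // exprn_ge0.
Qed.

Lemma Kterm_const_le N m e i l (kk : {ffun 'I_l.+1 -> 'I_i.+1}) (b s BG : R) :
  (i <= m)%N -> (i + l <= e)%N -> 0 <= b -> 1 <= s -> 0 <= BG ->
  `|kcoef R kk| * ((d%:R * 2 ^+ N) ^+ i * (b ^+ i * s ^+ (i + l)) * BG)
    <= Kterm_const N m b BG * s ^+ e.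
Proof.
move=> im ile b0 s1 BG0; have s0 : 0 <= s := le_trans ler01 s1.
have kc : `|kcoef R kk| <= 1.
  have prod_fact_gt0 : (0 < \prod_(j < l.+1) (kk j)`!)%N.
    by apply: prodn_gt0 => j; exact: fact_gt0.
  by rewrite /kcoef normfV ger0_norm // invf_le1 ?ler1n ?ltr0n.
have : 0 <= d%:R * 2 ^+ N :> R by rewrite mulr_ge0 ?exprn_ge0.
rewrite /Kterm_const; move: (d%:R * 2 ^+ N : R) => x x0.
have xb0 : 0 <= x * b by rewrite mulr_ge0.
have -> : x ^+ i * (b ^+ i * s ^+ (i + l)) * BG = (x * b) ^+ i * s ^+ (i + l) * BG.
  by rewrite exprMn mulrA.
apply: le_trans (_ : 1 * ((x * b + 1) ^+ m * s ^+ e * (BG + 1)) <= _); last first.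
  by rewrite mul1r le_eqVlt; apply/orP; left; apply/eqP; ring.
apply: ler_pM => //; first by rewrite !mulr_ge0 ?exprn_ge0.
apply: ler_pM; rewrite ?addr_ge0 ?lerDl //; first by rewrite mulr_ge0 ?exprn_ge0.
apply: ler_pM; rewrite ?exprn_ge0 //; last exact: ler_weXn2l.
apply: le_trans (_ : (x * b + 1) ^+ i <= _).
  by apply: lerXn2r; rewrite ?nnegrE ?addr_ge0 ?lerDl.
by apply: ler_weXn2l => //; rewrite lerDr.
Qed.

End KtermConst.

Section OpenDomain.
Context {R : realType} {d : nat}.
Local Notation V := 'rV[R]_d.
Variable D : set V.
Hypothesis openD : open D.

Lemma eq_in_near (W : normedModType R) (f g : V -> W) x :
  {in D, f =1 g} -> D x -> \near x, f x = g x.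
Proof. by move=> fg Dx; apply: filterS (openD Dx) => y /mem_set /fg. Qed.

Lemma eq_in_differentiable (W : normedModType R) (f g : V -> W) x :
  {in D, f =1 g} -> D x -> differentiable g x -> differentiable f x.
Proof.
by move=> fg Dx; apply: near_eq_differentiable; apply: eq_in_near Dx => y /fg.
Qed.

Lemma eq_in_derive (W : normedModType R) (f g : V -> W) u :
  {in D, f =1 g} -> {in D, 'D_u f =1 'D_u g}.
Proof. by move=> fg x /set_mem Dx; apply: near_eq_derive; exact: eq_in_near. Qed.

Lemma eq_in_dirDer (W : normedModType R) us (f g : V -> W) :
  {in D, f =1 g} -> {in D, dirDer us f =1 dirDer us g}.
Proof. by elim: us => //= u us IH fg; apply: eq_in_derive; exact: IH. Qed.

Definition diff_upto (W : normedModType R) N (f : V -> W) :=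
  forall us : seq V, (size us < N)%N -> forall x, D x -> differentiable (dirDer us f) x.

Definition unit_dirs (us : seq V) := forall u, u \in us -> enorm u <= 1.

Definition bounded_upto N B (f : V -> R) :=
  forall us : seq V, (size us <= N)%N -> unit_dirs us -> forall x, D x ->
    `|dirDer us f x| <= B.

Definition cbounded N B (f : V -> R) := diff_upto N f /\ bounded_upto N B f.

Section DiffUpto.
Variable W : normedModType R.
Implicit Types f g : V -> W.

Lemma eq_in_diff_upto N f g : {in D, f =1 g} -> diff_upto N g -> diff_upto N f.
Proof.
move=> fg dg us Hus x Dx.
by apply: (eq_in_differentiable (eq_in_dirDer us fg) Dx); exact: dg.
Qed.

Lemma diff_upto_le N' N f : (N' <= N)%N -> diff_upto N f -> diff_upto N' f.
Proof. by move=> le df us Hus; apply: df; apply: leq_trans le. Qed.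

Lemma diff_upto_dirDer N vs f : diff_upto (N + size vs) f -> diff_upto N (dirDer vs f).
Proof.
by move=> df us Hus x Dx; rewrite -dirDer_cat; apply: df; rewrite // size_cat ltn_add2r.
Qed.

Lemma diff_upto_derive N u f : diff_upto N.+1 f -> diff_upto N ('D_u f).
Proof. by move=> df; apply: (@diff_upto_dirDer _ [:: u]); rewrite addn1. Qed.

Lemma diff_upto_cst0 N : diff_upto N (fun _ => 0 : W).
Proof. by move=> us _ x _; rewrite dirDer_cst0; exact: differentiable_cst. Qed.

Lemma dirDerD N f g us : diff_upto N f -> diff_upto N g -> (size us <= N)%N ->
  {in D, dirDer us (fun y => f y + g y) =1 fun y => dirDer us f y + dirDer us g y}.
Proof.
move=> df dg; elim: us => [|u us IH] //= Hus x Dx.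
rewrite (eq_in_derive u (IH (ltnW Hus)) Dx); have {}Dx := set_mem Dx.
by apply: deriveD; apply: diff_derivable; [apply: df|apply: dg].
Qed.

Lemma diff_uptoD N f g : diff_upto N f -> diff_upto N g -> diff_upto N (fun y => f y + g y).
Proof.
move=> df dg us Hus x Dx.
apply: (eq_in_differentiable (dirDerD df dg (ltnW Hus)) Dx).
exact: differentiableD (df _ Hus _ Dx) (dg _ Hus _ Dx).
Qed.

Lemma dirDerZ N f (c : R) us : diff_upto N f -> (size us <= N)%N ->
  {in D, dirDer us (fun y => c *: f y) =1 fun y => c *: dirDer us f y}.
Proof.
move=> df; elim: us => [|u us IH] //= Hus x Dx.
rewrite (eq_in_derive u (IH (ltnW Hus)) Dx); have {}Dx := set_mem Dx.
by apply: deriveZ; apply: diff_derivable; apply: df.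
Qed.

Lemma diff_uptoZ N f c : diff_upto N f -> diff_upto N (fun y => c *: f y).
Proof.
move=> df us Hus x Dx.
apply: (eq_in_differentiable (dirDerZ c df (ltnW Hus)) Dx).
exact: differentiableZ (df _ Hus _ Dx).
Qed.

Lemma diff_upto_sum N I (r : seq I) (P : pred I) (F : I -> V -> W) :
  (forall i, P i -> diff_upto N (F i)) -> diff_upto N (fun y => \sum_(i <- r | P i) F i y).
Proof.
move=> dF; rewrite -fct_sumE; elim/big_ind: _ => //; first exact: diff_upto_cst0.
exact: diff_uptoD.
Qed.

Lemma dirDer_sum N I (r : seq I) (P : pred I) (F : I -> V -> W) us :
  (forall i, P i -> diff_upto N (F i)) -> (size us <= N)%N ->
  {in D, dirDer us (fun y => \sum_(i <- r | P i) F i y) =1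
         fun y => \sum_(i <- r | P i) dirDer us (F i) y}.
Proof.
move=> dF Hus; elim: r => [|i r IH] y Dy.
  have -> : (fun y => \sum_(i <- [::] | P i) F i y) = fun _ => 0.
    by apply/funext => z; rewrite big_nil.
  by rewrite dirDer_cst0 big_nil.
have dr := diff_upto_sum r dF.
rewrite big_cons; case: ifP => Pi; last first.
  by rewrite -IH //; congr (dirDer us _ y); apply/funext => z; rewrite big_cons Pi.
rewrite -IH // -(dirDerD (dF i Pi) dr Hus Dy).
by congr (dirDer us _ y); apply/funext => z; rewrite big_cons Pi.
Qed.

End DiffUpto.

Lemma deriveM_in N (f g : V -> R) u : diff_upto N.+1 f -> diff_upto N.+1 g ->
  {in D, 'D_u (fun y => f y * g y) =1 fun y => f y * 'D_u g y + g y * 'D_u f y}.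
Proof.
move=> df dg x /set_mem Dx; apply: deriveM; apply: diff_derivable.
  exact: (df [::]).
exact: (dg [::]).
Qed.

Lemma diff_uptoM N (f g : V -> R) :
  diff_upto N f -> diff_upto N g -> diff_upto N (fun y => f y * g y).
Proof.
elim: N f g => [|N IH] f g df dg us // Hus x Dx.
case/lastP: us Hus => [|us u] Hus.
  exact: differentiableM (df [::] isT x Dx) (dg [::] isT x Dx).
rewrite size_rcons ltnS in Hus; rewrite dirDer_rcons.
apply: (eq_in_differentiable (eq_in_dirDer us (deriveM_in u df dg)) Dx).
suff dN : diff_upto N (fun y => f y * 'D_u g y + g y * 'D_u f y) by exact: dN.
have df' := diff_upto_le (leqnSn N) df; have dg' := diff_upto_le (leqnSn N) dg.
by apply: diff_uptoD; apply: IH => //; exact: diff_upto_derive.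
Qed.

Lemma unit_dirs_cat us vs : unit_dirs (us ++ vs) <-> unit_dirs us /\ unit_dirs vs.
Proof.
split=> [uv|[uu vv] w]; last by rewrite mem_cat => /orP[/uu|/vv].
by split=> w wi; apply: uv; rewrite mem_cat wi ?orbT.
Qed.

Lemma unit_dirs1 u : unit_dirs [:: u] <-> enorm u <= 1.
Proof. by split=> [/(_ u (mem_head _ _)) //|u1 w]; rewrite mem_seq1 => /eqP->. Qed.

Section Bounded.
Implicit Types f g : V -> R.

Lemma eq_in_bounded_upto N B f g :
  {in D, f =1 g} -> bounded_upto N B g -> bounded_upto N B f.
Proof. by move=> fg bg us Hus uu x Dx; rewrite (eq_in_dirDer us fg (mem_set Dx)); exact: bg. Qed.

Lemma bounded_upto_le N' N B B' f :
  (N' <= N)%N -> B <= B' -> bounded_upto N B f -> bounded_upto N' B' f.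
Proof.
move=> le1 le2 bf us Hus uu x Dx; apply: le_trans le2.
by apply: bf => //; exact: leq_trans le1.
Qed.

Lemma bounded_upto_dirDer N B vs f :
  bounded_upto (N + size vs) B f -> unit_dirs vs -> bounded_upto N B (dirDer vs f).
Proof.
move=> bf vv us Hus uu x Dx; rewrite -dirDer_cat; apply: bf => //.
  by rewrite size_cat leq_add2r.
exact/unit_dirs_cat.
Qed.

Lemma bounded_upto_derive N B u f :
  bounded_upto N.+1 B f -> enorm u <= 1 -> bounded_upto N B ('D_u f).
Proof.
by move=> bf u1; apply: (@bounded_upto_dirDer _ _ [:: u]); rewrite ?addn1 // unit_dirs1.
Qed.

Lemma bounded_uptoM N B B' f g : 0 <= B -> 0 <= B' ->
  diff_upto N f -> diff_upto N g -> bounded_upto N B f -> bounded_upto N B' g ->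
  bounded_upto N (2 ^+ N * B * B') (fun y => f y * g y).
Proof.
elim: N f g B B' => [|N IH] f g B B' B0 B'0 df dg bf bg us Hus uu x Dx.
  move: Hus; rewrite leqn0 size_eq0 => /eqP-> /=; rewrite expr0 mul1r normrM.
  by apply: ler_pM => //; [apply: (bf [::])|apply: (bg [::])].
case/lastP: us Hus uu => [|us u] Hus uu.
  rewrite /= normrM -mulrA -[X in X <= _]mul1r.
  apply: ler_pM; rewrite ?mulr_ge0 ?exprn_ege1 ?ler1n //.
  by apply: ler_pM => //; [apply: (bf [::])|apply: (bg [::])].
rewrite size_rcons ltnS in Hus; rewrite dirDer_rcons.
move: uu; rewrite -cats1 => /unit_dirs_cat[uu /unit_dirs1 u1].
rewrite (eq_in_dirDer us (deriveM_in u df dg) (mem_set Dx)).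
have df' := diff_upto_le (leqnSn N) df; have dg' := diff_upto_le (leqnSn N) dg.
have bf' := bounded_upto_le (leqnSn N) (lexx B) bf.
have bg' := bounded_upto_le (leqnSn N) (lexx B') bg.
have dfg := diff_uptoM df' (diff_upto_derive u dg).
have dgf := diff_uptoM dg' (diff_upto_derive u df).
rewrite (dirDerD dfg dgf Hus (mem_set Dx)); apply: le_trans (ler_normD _ _) _.
have := IH f ('D_u g) B B' B0 B'0 df' (diff_upto_derive u dg) bf'
  (bounded_upto_derive bg u1) us Hus uu x Dx.
have := IH g ('D_u f) B' B B'0 B0 dg' (diff_upto_derive u df) bg'
  (bounded_upto_derive bf u1) us Hus uu x Dx.
move=> h2 h1; suff -> : 2 ^+ N.+1 * B * B' = 2 ^+ N * B * B' + 2 ^+ N * B' * B.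
  exact: lerD.
by rewrite exprS; ring.
Qed.

Lemma eq_in_cbounded N B f g : {in D, f =1 g} -> cbounded N B g -> cbounded N B f.
Proof.
by move=> fg [dg bg]; split; [exact: eq_in_diff_upto dg|exact: eq_in_bounded_upto bg].
Qed.

Lemma cbounded_le N' N B B' f :
  (N' <= N)%N -> B <= B' -> cbounded N B f -> cbounded N' B' f.
Proof.
by move=> le1 le2 [df bf]; split; [exact: diff_upto_le df|exact: bounded_upto_le bf].
Qed.

Lemma cbounded_dirDer N B vs f :
  cbounded (N + size vs) B f -> unit_dirs vs -> cbounded N B (dirDer vs f).
Proof. by move=> [df bf] vv; split; [exact: diff_upto_dirDer|exact: bounded_upto_dirDer]. Qed.

Lemma cbounded_cst0 N : cbounded N 0 (fun _ => 0).
Proof. by split=> [|us _ _ x _]; [exact: diff_upto_cst0|rewrite dirDer_cst0 normr0]. Qed.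

Lemma cboundedD N B B' f g :
  cbounded N B f -> cbounded N B' g -> cbounded N (B + B') (fun y => f y + g y).
Proof.
move=> [df bf] [dg bg]; split; first exact: diff_uptoD.
move=> us Hus uu x Dx; rewrite (dirDerD df dg Hus (mem_set Dx)).
by apply: le_trans (ler_normD _ _) _; apply: lerD; [apply: bf|apply: bg].
Qed.

Lemma cboundedZ N B f c : cbounded N B f -> cbounded N (`|c| * B) (fun y => c * f y).
Proof.
move=> [df bf]; split; first exact: (diff_uptoZ c df).
move=> us Hus uu x Dx; rewrite (dirDerZ c df Hus (mem_set Dx)) /= normrM.
by apply: ler_wpM2l => //; apply: bf.
Qed.

Lemma cboundedN N B f : cbounded N B f -> cbounded N B (fun y => - f y).
Proof.
move=> /(cboundedZ (-1)); rewrite normrN normr1 mul1r.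
by apply: eq_in_cbounded => y _; rewrite mulN1r.
Qed.

Lemma cbounded_sum N I (r : seq I) (P : pred I) (F : I -> V -> R) (B : I -> R) :
  (forall i, P i -> cbounded N (B i) (F i)) ->
  cbounded N (\sum_(i <- r | P i) B i) (fun y => \sum_(i <- r | P i) F i y).
Proof.
move=> HF; rewrite -fct_sumE; elim/big_rec2: _ => [|i b f Pi]; first exact: cbounded_cst0.
exact: cboundedD (HF i Pi).
Qed.

Lemma cboundedM N B B' f g : 0 <= B -> 0 <= B' ->
  cbounded N B f -> cbounded N B' g -> cbounded N (2 ^+ N * B * B') (fun y => f y * g y).
Proof. by move=> B0 B'0 [df bf] [dg bg]; split; [exact: diff_uptoM|exact: bounded_uptoM]. Qed.

End Bounded.

Definition basisv (q : 'I_d) : V := delta_mx ord0 q.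

Definition coordf (F : V -> V) (q : 'I_d) : V -> R := fun y => F y ord0 q.

Lemma enorm_basisv q : enorm (basisv q) = 1.
Proof.
rewrite /enorm (bigD1 q) //= big1 ?addr0 => [|i iq].
  by rewrite /basisv mxE !eqxx expr1n sqrtr1.
by rewrite /basisv mxE eqxx (negbTE iq) expr0n.
Qed.

Lemma enorm_le_sum (v : V) : enorm v <= \sum_(q < d) `|v ord0 q|.
Proof.
have [sq_le ge0] : \sum_(q < d) v ord0 q ^+ 2 <= (\sum_(q < d) `|v ord0 q|) ^+ 2 /\
                   0 <= \sum_(q < d) `|v ord0 q|.
  elim/big_ind2 : _ => [|a1 b1 a2 b2 [h1 p1] [h2 p2]|q _].
  - by rewrite expr0n.
  - by split; [apply: le_trans (lerD h1 h2) _; nra|exact: addr_ge0].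
  - by rewrite real_normK ?num_real.
by rewrite /enorm -(ger0_norm ge0) -sqrtr_sqr ler_sqrt // sqr_ge0.
Qed.

Lemma derive_coord (h : V -> R) x u :
  differentiable h x -> 'D_u h x = \sum_(q < d) u ord0 q * 'D_(basisv q) h x.
Proof.
move=> dh; rewrite deriveE // {1}(row_sum_delta u) linear_sum.
by apply: eq_bigr => q _; rewrite linearZ /= -deriveE.
Qed.

Lemma derive_row (G : 'I_d -> V -> R) x u : (forall q, differentiable (G q) x) ->
  'D_u (fun y => \row_q G q y) x = \row_q 'D_u (G q) x.
Proof.
move=> dG.
have -> : (fun y => \row_q G q y) = \sum_(q < d) (fun y => G q y *: basisv q).
  rewrite fct_sumE; apply/funext => y; rewrite [LHS]row_sum_delta.
  by apply: eq_bigr => q _; rewrite mxE.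
rewrite derive_sum => [|q]; last exact/diff_derivable/differentiableZl.
rewrite [RHS]row_sum_delta; apply: eq_bigr => q _.
by rewrite deriveE ?diffZl -?deriveE ?mxE //; exact: differentiableZl.
Qed.

Lemma coordf_dirDer N F us : (forall q, diff_upto N (coordf F q)) -> (size us <= N)%N ->
  forall q, {in D, coordf (dirDer us F) q =1 dirDer us (coordf F q)}.
Proof.
move=> dF; elim: us => [|u us IH] //= Hus q x Dx.
have E : {in D, dirDer us F =1 fun y => \row_q' dirDer us (coordf F q') y}.
  by move=> y Dy; apply/rowP => j; rewrite mxE -(IH (ltnW Hus) j y Dy).
rewrite /coordf (eq_in_derive u E Dx) derive_row ?mxE // => q'.
exact: dF (set_mem Dx).
Qed.

Fixpoint coord_expand (us : seq V) (F : seq V -> R) : R :=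
  if us is u :: us' then
    \sum_(q < d) u ord0 q * coord_expand us' (fun es => F (basisv q :: es))
  else F [::].

Lemma dirDer_expand1 pre u us g x :
  diff_upto (size pre + (size us).+1) g -> D x ->
  dirDer (pre ++ u :: us) g x = \sum_(q < d) u ord0 q * dirDer (pre ++ basisv q :: us) g x.
Proof.
move=> dg /mem_set Dx; rewrite dirDer_cat /=; set h := dirDer us g.
have dh : diff_upto (size pre).+1 h.
  by apply: diff_upto_dirDer; apply: diff_upto_le dg; rewrite addSnnS.
have E : {in D, 'D_u h =1 fun y => \sum_(q < d) u ord0 q * 'D_(basisv q) h y}.
  by move=> y /set_mem Dy; apply: derive_coord; exact: (dh [::]).
have dF q : true -> diff_upto (size pre) (fun y => u ord0 q * 'D_(basisv q) h y).
  by move=> _; apply: (diff_uptoZ (u ord0 q)); exact: diff_upto_derive.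
rewrite (eq_in_dirDer pre E Dx) (dirDer_sum _ dF (leqnn _) Dx); apply: eq_bigr => q _.
by rewrite (dirDerZ (u ord0 q) (diff_upto_derive _ dh) (leqnn _) Dx) dirDer_cat.
Qed.

Lemma dirDer_coord_expand pre us g x : diff_upto (size pre + size us) g -> D x ->
  dirDer (pre ++ us) g x = coord_expand us (fun es => dirDer (pre ++ es) g x).
Proof.
elim: us pre => [|u us IH] pre dg Dx //=.
rewrite dirDer_expand1 //; apply: eq_bigr => q _; congr (_ * _).
rewrite -cat_rcons IH //; last by rewrite size_rcons addSnnS.
by congr coord_expand; apply/funext => es; rewrite cat_rcons.
Qed.

Lemma cbounded_coord_expand N (ps : seq ((V -> V) * R)) (G : seq V -> V -> R) BG :
  (forall p, p \in ps -> 0 <= p.2 /\ forall q, cbounded N p.2 (coordf p.1 q)) ->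
  0 <= BG -> (forall es, size es = size ps -> unit_dirs es -> cbounded N BG (G es)) ->
  cbounded N ((d%:R * 2 ^+ N) ^+ size ps * \prod_(p <- ps) p.2 * BG)
    (fun y => coord_expand (map (fun p => p.1 y) ps) (fun es => G es y)).
Proof.
elim: ps G => [|p ps IH] G Hps BG0 HG.
  by rewrite expr0 big_nil !mul1r; apply: HG.
have [p0 Hp] := Hps p (mem_head _ _).
have Hps' p' : p' \in ps -> 0 <= p'.2 /\ forall q, cbounded N p'.2 (coordf p'.1 q).
  by move=> p'ps; apply: Hps; rewrite in_cons p'ps orbT.
set Bi := (d%:R * 2 ^+ N) ^+ size ps * \prod_(p <- ps) p.2 * BG.
have Bi0 : 0 <= Bi.
  rewrite /Bi !mulr_ge0 ?exprn_ge0 // big_seq_cond.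
  by apply: prodr_ge0 => i /andP[/Hps' []].
have Hq q : true -> cbounded N (2 ^+ N * p.2 * Bi) (fun y => coordf p.1 q y *
    coord_expand (map (fun p => p.1 y) ps) (fun es => G (basisv q :: es) y)).
  move=> _; apply: cboundedM => //; apply: IH => // es Hes ues.
  apply: HG; first by rewrite /= Hes.
  by apply/(unit_dirs_cat [:: basisv q] es); rewrite unit_dirs1 enorm_basisv.
apply: cbounded_le (leqnn _) _ (cbounded_sum (index_enum 'I_d) Hq).
rewrite sumr_const card_ord /= big_cons /Bi -mulr_natl exprS le_eqVlt.
by apply/orP; left; apply/eqP; ring.
Qed.

Lemma cbounded_Kterm N m e i l (kk : {ffun 'I_l.+1 -> 'I_i.+1}) (f : nat -> V -> V)
    (b s BG : R) (G : seq V -> V -> R) :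
  Kset kk -> (i <= m)%N -> (i + l <= e)%N -> 0 <= b -> 1 <= s -> 0 <= BG ->
  (forall t : 'I_l.+1, (0 < kk t)%N ->
     forall q, cbounded N (b * s ^+ t.+1) (coordf (f t.+1) q)) ->
  (forall es, size es = i -> unit_dirs es -> cbounded N BG (G es)) ->
  cbounded N (Kterm_const d N m b BG * s ^+ e)
    (fun y => kcoef R kk * coord_expand (dirs kk (fun j => f j y)) (fun es => G es y)).
Proof.
move=> Kk im ile b0 s1 BG0 Hf HG; have s0 : 0 <= s := le_trans ler01 s1.
set ps := flatten [seq nseq (kk t) (f t.+1, b * s ^+ t.+1) | t <- enum 'I_l.+1].
have size_ps : size ps = i by rewrite size_flatten_nseq big_enum; case/andP: Kk => /eqP.
have prod_ps : \prod_(p <- ps) p.2 = b ^+ i * s ^+ (i + l).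
  by rewrite prod_flatten_nseq big_enum /= Kset_prod.
apply: cbounded_le (leqnn _) (Kterm_const_le d N kk im ile b0 s1 BG0) _; apply: cboundedZ.
have -> : (fun y => coord_expand (dirs kk (fun j => f j y)) (fun es => G es y)) =
          (fun y => coord_expand (map (fun p => p.1 y) ps) (fun es => G es y)).
  by apply/funext => y; rewrite map_flatten_nseq.
rewrite -prod_ps -{1}size_ps; apply: cbounded_coord_expand => //.
  move=> p /mem_flatten_nseq [t kt ->]; split; last exact: Hf.
  by rewrite mulr_ge0 // exprn_ge0.
by rewrite size_ps.
Qed.
Lemma enorm_dirDer_le r B F us x : (forall q, cbounded r B (coordf F q)) -> D x ->
  size us = r -> unit_dirs us -> enorm (dirDer us F x) <= d%:R * B.
Proof.
move=> HF Dx usr uu; apply: le_trans (enorm_le_sum _) _.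
apply: le_trans (_ : \sum_(q < d) B <= _); last by rewrite sumr_const card_ord mulr_natl.
apply: ler_sum => q _; rewrite -[_ ord0 q]/(coordf (dirDer us F) q x).
rewrite (coordf_dirDer (fun q => (HF q).1) _ q (mem_set Dx)); last by rewrite usr.
by apply: (HF q).2; rewrite ?usr.
Qed.

End OpenDomain.

Section Moments.
Variables (R : realType) (beta : R).
Hypotheses (beta_ge0 : 0 <= beta) (beta_lt1 : beta < 1).

Definition negbin_sum p n := \sum_(k < n) 'C(k + p, p)%:R * beta ^+ k.

Lemma negbin_sum0 n : (1 - beta) * negbin_sum 0 n = 1 - beta ^+ n.
Proof.
rewrite /negbin_sum; elim: n => [|n IH]; first by rewrite big_ord0 expr0 mulr0 subrr.
by rewrite big_ord_recr /= mulrDr IH addn0 bin0 exprS; ring.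
Qed.

Lemma negbin_sumS p n :
  (1 - beta) * negbin_sum p.+1 n = negbin_sum p n - 'C(n + p, p.+1)%:R * beta ^+ n.
Proof.
rewrite /negbin_sum; elim: n => [|n IH].
  by rewrite !big_ord0 mulr0 add0n bin_small // mul0r subrr.
by rewrite !big_ord_recr /= mulrDr IH addSn binS natrD addnS binS natrD exprS; ring.
Qed.

Lemma negbin_sum_le p n : negbin_sum p n <= (1 - beta) ^- p.+1.
Proof.
have hb : 0 < 1 - beta by rewrite subr_gt0.
elim: p n => [|p IH] n.
  rewrite expr1 -(ler_pM2l hb) negbin_sum0 mulfV ?gt_eqF //.
  by rewrite lerBlDr lerDl exprn_ge0.
rewrite -(ler_pM2l hb) negbin_sumS exprS invfM mulrA mulfV ?gt_eqF // mul1r.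
by apply: le_trans (IH n); rewrite lerBlDr lerDl mulr_ge0 // exprn_ge0.
Qed.

Lemma expn_le_ffact k p : (k ^ p <= (k + p) ^_ p)%N.
Proof.
elim: p => [|p IH]; first by rewrite ffactn0.
by rewrite addnS ffactSS expnS leq_mul // -addnS leq_addr.
Qed.

Definition moment_const p := p`!%:R * (1 - beta) ^- p.+1.

(* [k ^ p <= p! * 'C(k + p, p)], and the [negbin_sum] are partial sums of
   [(1 - beta) ^- p.+1]. *)
Lemma sum_exprX_le p n : \sum_(k < n) beta ^+ k * k%:R ^+ p <= moment_const p.
Proof.
apply: le_trans (_ : p`!%:R * negbin_sum p n <= _); last first.
  by rewrite ler_wpM2l // negbin_sum_le.
rewrite /negbin_sum mulr_sumr; apply: ler_sum => k _.
rewrite mulrA [_ * beta ^+ k]mulrC; apply: ler_wpM2l; first exact: exprn_ge0.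
by rewrite -natrX -natrM ler_nat mulnC bin_ffact expn_le_ffact.
Qed.

Lemma sum_exprSX_le p n : \sum_(k < n) beta ^+ k.+1 * k.+1%:R ^+ p <= moment_const p.
Proof.
apply: le_trans (sum_exprX_le p n.+1); rewrite big_ord_recl lerDr.
by rewrite mulr_ge0 ?exprn_ge0.
Qed.

End Moments.

Section Stages.
Variables (R : realType) (d : nat) (beta : R) (L : nat -> 'rV[R]_d -> R).

Lemma stageS m : stage beta L m.+1 =
  (fun j => if j == m.+1 then
              (if m == 0%N then c1 beta L else cnext beta L m.+1 (stage beta L m).2)
            else (stage beta L m).1 j,
   fun j => if j == m.+1 then
     pnext m.+1 (fun j => if j == m.+1 then
         (if m == 0%N then c1 beta L else cnext beta L m.+1 (stage beta L m).2)
       else (stage beta L m).1 j) (stage beta L m).2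
     else (stage beta L m).2 j).
Proof. by rewrite /=; case: (stage beta L m). Qed.

Lemma stage_memo m j : (j <= m)%N ->
  (stage beta L m).1 j = cmem beta L j /\ (stage beta L m).2 j = phist beta L j.
Proof.
elim: m => [|m IH]; first by rewrite leqn0 => /eqP->.
case: (eqVneq j m.+1) => [->|jm] Hj //.
by rewrite stageS /= (negbTE jm); apply: IH; rewrite -ltnS ltn_neqAle jm.
Qed.

Lemma cmem1 : cmem beta L 1 = c1 beta L.
Proof. by rewrite /cmem stageS. Qed.

Lemma cmemS m : (0 < m)%N -> cmem beta L m.+1 = cnext beta L m.+1 (stage beta L m).2.
Proof. by case: m => // m _; rewrite /cmem stageS /= eqxx. Qed.

Lemma stage_upd_cmem m j : (j <= m.+1)%N ->
  (if j == m.+1 then cmem beta L m.+1 else (stage beta L m).1 j) = cmem beta L j.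
Proof.
case: eqP => [->//|/eqP jm] jle.
by rewrite (stage_memo (_ : j <= m)%N).1 // -ltnS ltn_neqAle jm.
Qed.

Lemma phistS m : phist beta L m.+1 =
  pnext m.+1 (fun j => if j == m.+1 then cmem beta L m.+1 else (stage beta L m).1 j)
    (stage beta L m).2.
Proof. by rewrite /phist /cmem !stageS /= !eqxx. Qed.

End Stages.

Section Bounds.
Variables (R : realType) (beta : R) (K d : nat) (M : R).
Hypotheses (beta_gt0 : 0 < beta) (beta_lt1 : beta < 1) (K_ge2 : (2 <= K)%N).
Local Notation V := 'rV[R]_d.
Local Notation N := (2 * K)%N.

Definition M0 := Num.max M 0.

Definition cmem_const m (B : R) :=
  \sum_(i < m.+1) \sum_(kk : {ffun 'I_(m - i).+1 -> 'I_i.+1} | Kset kk)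
     Kterm_const d (N - m.+1) m.+1 B M0.

Definition phist_const m (B : R) :=
  \sum_(j < m.+1) \sum_(i < (m.+1 - j.+1).+1)
     \sum_(kk : {ffun 'I_(m.+1 - j.+1 - i).+1 -> 'I_i.+1} | Kset kk)
       Kterm_const d (N - m.+1) m.+1 B B.

Fixpoint stage_const m : R :=
  if m is m'.+1 then
    let B1 := Num.max (stage_const m')
      (if m' == 0%N then M0 * moment_const beta 0
       else cmem_const m' (stage_const m') * moment_const beta m') in
    Num.max B1 (phist_const m' B1)
  else 0.

Lemma M0_ge0 : 0 <= M0. Proof. by rewrite le_max lexx orbT. Qed.

Lemma cmem_const_ge0 m B : 0 <= B -> 0 <= cmem_const m B.
Proof.
by move=> B0; do 2!apply: sumr_ge0 => ? _; apply: Kterm_const_ge0 => //; exact: M0_ge0.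
Qed.

Lemma phist_const_ge0 m B : 0 <= B -> 0 <= phist_const m B.
Proof. by move=> B0; do 3!apply: sumr_ge0 => ? _; exact: Kterm_const_ge0. Qed.

Lemma stage_const_ge0 m : 0 <= stage_const m.
Proof. by elim: m => //= m IH; rewrite !le_max IH. Qed.

Variables (D : set V) (L : nat -> V -> R).
Hypotheses (openD : open D) (smoothL : forall s, CkOn N D (L s)).
Hypothesis boundL : forall s k, (1 <= k <= N)%N -> forall theta, D theta ->
  forall us : seq V, size us = k -> unit_dirs us -> `|dirDer us (L s) theta| <= M.

Definition cmem_bounded m B := forall j, (0 < j <= m)%N -> forall n q,
  cbounded D (N - j) B (coordf (cmem beta L j n) q).

Definition phist_bounded m B := forall j, (0 < j <= m)%N -> forall n a, (0 < a <= n)%N ->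
  forall q, cbounded D (N - j) (B * a%:R ^+ j) (coordf (phist beta L j n a) q).

Lemma cmem_bounded_le m B B' : B <= B' -> cmem_bounded m B -> cmem_bounded m B'.
Proof. by move=> BB' HC j jm n q; apply: cbounded_le (leqnn _) BB' (HC j jm n q). Qed.

Lemma phist_bounded_le m B B' : B <= B' -> phist_bounded m B -> phist_bounded m B'.
Proof.
move=> BB' HP j jm n a an q; apply: cbounded_le (leqnn _) _ (HP j jm n a an q).
by rewrite ler_wpM2r ?exprn_ge0.
Qed.

Lemma cmem_boundedS m B : cmem_bounded m B ->
  (forall n q, cbounded D (N - m.+1) B (coordf (cmem beta L m.+1 n) q)) ->
  cmem_bounded m.+1 B.
Proof.
move=> HC HCm j /andP[j0]; rewrite leq_eqVlt ltnS => /orP[/eqP-> //|jm].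
by apply: HC; rewrite j0.
Qed.

Lemma phist_boundedS m B : phist_bounded m B ->
  (forall n a, (0 < a <= n)%N -> forall q,
     cbounded D (N - m.+1) (B * a%:R ^+ m.+1) (coordf (phist beta L m.+1 n a) q)) ->
  phist_bounded m.+1 B.
Proof.
move=> HP HPm j /andP[j0]; rewrite leq_eqVlt ltnS => /orP[/eqP-> //|jm].
by apply: HP; rewrite j0.
Qed.

Lemma cbounded_loss s us N' : unit_dirs us -> (0 < size us)%N -> (N' + size us <= N)%N ->
  cbounded D N' M0 (dirDer us (L s)).
Proof.
move=> uu us_gt0 usN; split=> vs vsN x Dx; rewrite -dirDer_cat.
  by apply: (smoothL s).1; rewrite // size_cat; apply: leq_trans usN; rewrite ltn_add2r.
move=> vv; apply: le_trans (_ : M <= M0); last by rewrite le_max lexx.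
apply: (boundL _ (k := size (vs ++ us))) => //; last exact/unit_dirs_cat.
by rewrite size_cat; apply/andP; split; [exact: leq_trans us_gt0 (leq_addl _ _)|
  apply: leq_trans usN; rewrite leq_add2r].
Qed.

Lemma coord_cmem1 n q : {in D, coordf (cmem beta L 1 n) q =1
  fun y => - \sum_(k < n.+1) beta ^+ k * dirDer [:: basisv q] (L (n - k)%N) y}.
Proof.
move=> y _; rewrite cmem1 /coordf /c1 !mxE summxE; congr (- _).
by apply: eq_bigr => k _; rewrite !mxE.
Qed.

Lemma cbounded_cmem1 n q :
  cbounded D (N - 1) (M0 * moment_const beta 0) (coordf (cmem beta L 1 n) q).
Proof.
apply: (eq_in_cbounded openD (coord_cmem1 n q)); apply: (cboundedN openD).
have Hk (k : 'I_n.+1) : true -> cbounded D (N - 1) (`|beta ^+ k| * M0)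
    (fun y => beta ^+ k * dirDer [:: basisv q] (L (n - k)%N) y).
  move=> _; apply: (cboundedZ openD); apply: cbounded_loss => //=; last lia.
  by rewrite unit_dirs1 enorm_basisv.
apply: cbounded_le (leqnn _) _ (cbounded_sum openD _ Hk).
rewrite -mulr_suml mulrC ler_wpM2l ?M0_ge0 //.
apply: le_trans (sum_exprX_le (ltW beta_gt0) beta_lt1 0 n.+1); apply: ler_sum => k _.
by rewrite expr0 mulr1 ger0_norm // exprn_ge0 // ltW.
Qed.

Lemma coord_cmemS m n q : (0 < m)%N -> (m.+1 <= K)%N ->
  {in D, coordf (cmem beta L m.+1 n) q =1 fun y => - \sum_(k < n) beta ^+ k.+1 *
    \sum_(i < m.+1) \sum_(kk : {ffun 'I_(m - i).+1 -> 'I_i.+1} | Kset kk)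
      kcoef R kk * coord_expand (dirs kk (fun j => (stage beta L m).2 j n k.+1 y))
                     (fun es => dirDer (basisv q :: es) (L (n - k.+1)%N) y)}.
Proof.
move=> m_gt0 mK y Dy; rewrite cmemS // /coordf /cnext !mxE summxE; congr (- _).
rewrite big_add1 /= big_mkord; apply: eq_bigr => k _; rewrite !mxE summxE; congr (_ * _).
apply: eq_bigr => i _; rewrite summxE; apply: eq_bigr => kk Kk; rewrite !mxE; congr (_ * _).
set P := dirs kk _.
have dL : diff_upto D (1 + size P) (L (n - k.+1)%N).
  apply: (diff_upto_le _ (smoothL _).1); rewrite size_dirs //=; have := ltn_ord i; lia.
exact: (dirDer_coord_expand openD (pre := [:: basisv q]) dL (set_mem Dy)).
Qed.

Lemma coord_phistS m B n a q : (m.+1 <= K)%N -> cmem_bounded m.+1 B ->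
  {in D, coordf (phist beta L m.+1 n a) q =1 fun y => - \sum_(s < a) \sum_(j < m.+1)
    \sum_(i < (m.+1 - j.+1).+1) \sum_(kk : {ffun 'I_(m.+1 - j.+1 - i).+1 -> 'I_i.+1} | Kset kk)
      kcoef R kk * coord_expand (dirs kk (fun t => (stage beta L m).2 t n s.+1 y))
                     (fun es => dirDer es (coordf (cmem beta L j.+1 (n - s.+1)) q) y)}.
Proof.
move=> mK HC y Dy; rewrite phistS /coordf /pnext !mxE summxE; congr (- _).
rewrite big_add1 /= big_mkord; apply: eq_bigr => s _; rewrite summxE.
rewrite big_add1 /= big_mkord; apply: eq_bigr => j _; rewrite summxE.
apply: eq_bigr => i _; rewrite summxE; apply: eq_bigr => kk Kk; rewrite !mxE; congr (_ * _).
have jm : (0 < j.+1 <= m.+1)%N by rewrite /= ltn_ord.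
rewrite stage_upd_cmem //; set P := dirs kk _.
have dC q' : diff_upto D (size P) (coordf (cmem beta L j.+1 (n - s.+1)) q').
  apply: (diff_upto_le _ (HC _ jm _ q').1); rewrite size_dirs //; have := ltn_ord i; lia.
rewrite -[LHS]/(coordf (dirDer P _) q y) (coordf_dirDer openD dC (leqnn _) q Dy).
exact: (dirDer_coord_expand openD (pre := [::]) (dC q) (set_mem Dy)).
Qed.

Lemma cbounded_phist_dirs m B n s i l (kk : {ffun 'I_l.+1 -> 'I_i.+1}) :
  phist_bounded m B -> (i + l <= m)%N -> (0 < s <= n)%N -> Kset kk ->
  forall t : 'I_l.+1, (0 < kk t)%N -> forall q,
    cbounded D (N - m.+1) (B * s%:R ^+ t.+1) (coordf ((stage beta L m).2 t.+1 n s) q).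
Proof.
move=> HP ilm sn Kk t kt q; have := Kset_gt0 Kk kt; have := ltn_ord t => tl i_gt0.
have tm : (t.+1 <= m)%N by lia.
rewrite (stage_memo beta L tm).2.
by apply: cbounded_le _ (lexx _) (HP t.+1 _ n s sn q); rewrite ?tm //=; lia.
Qed.

Lemma cbounded_cmem_term m B n k q i (kk : {ffun 'I_(m - i).+1 -> 'I_i.+1}) :
  (m.+1 <= K)%N -> 0 <= B -> phist_bounded m B -> (i <= m)%N -> (0 < k <= n)%N ->
  Kset kk ->
  cbounded D (N - m.+1) (Kterm_const d (N - m.+1) m.+1 B M0 * k%:R ^+ m)
    (fun y => kcoef R kk * coord_expand (dirs kk (fun j => (stage beta L m).2 j n k y))
                (fun es => dirDer (basisv q :: es) (L (n - k)%N) y)).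
Proof.
move=> mK B0 HP im kn Kk; have il : (i + (m - i) <= m)%N by rewrite subnKC.
apply: (cbounded_Kterm openD (f := fun j => (stage beta L m).2 j n k)
  (G := fun es => dirDer (basisv q :: es) (L (n - k)%N)) Kk (leqW im) il B0 _ M0_ge0).
- by rewrite ler1n; case/andP: kn.
- exact: cbounded_phist_dirs HP il kn Kk.
- move=> es es_i ues; apply: cbounded_loss => //=; last lia.
  by apply/(unit_dirs_cat [:: basisv q] es); rewrite unit_dirs1 enorm_basisv.
Qed.

Lemma cbounded_phist_term m B n s q j i
    (kk : {ffun 'I_(m.+1 - j.+1 - i).+1 -> 'I_i.+1}) :
  (m.+1 <= K)%N -> 0 <= B -> cmem_bounded m.+1 B -> phist_bounded m B -> (j <= m)%N ->
  (i <= m.+1 - j.+1)%N -> (0 < s <= n)%N -> Kset kk ->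
  cbounded D (N - m.+1) (Kterm_const d (N - m.+1) m.+1 B B * s%:R ^+ m)
    (fun y => kcoef R kk * coord_expand (dirs kk (fun t => (stage beta L m).2 t n s y))
                (fun es => dirDer es (coordf (cmem beta L j.+1 (n - s)) q) y)).
Proof.
move=> mK B0 HC HP jm im sn Kk; have jm' : (0 < j.+1 <= m.+1)%N by rewrite /= ltnS.
have il : (i + (m.+1 - j.+1 - i) <= m)%N by rewrite subnKC // subSS leq_subr.
apply: (cbounded_Kterm openD (f := fun t => (stage beta L m).2 t n s)
  (G := fun es => dirDer es (coordf (cmem beta L j.+1 (n - s)) q)) Kk _ il B0 _ B0).
- exact: leq_trans im (leq_subr _ _).
- by rewrite ler1n; case/andP: sn.
- exact: cbounded_phist_dirs HP il sn Kk.
- move=> es es_i ues; apply: (cbounded_dirDer (vs := es)) => //.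
  by apply: cbounded_le _ (lexx _) (HC _ jm' _ q); rewrite es_i; lia.
Qed.

Lemma cbounded_cmemS m B : (0 < m)%N -> (m.+1 <= K)%N -> 0 <= B -> phist_bounded m B ->
  forall n q, cbounded D (N - m.+1) (cmem_const m B * moment_const beta m)
                (coordf (cmem beta L m.+1 n) q).
Proof.
move=> m_gt0 mK B0 HP n q; apply: (eq_in_cbounded openD (coord_cmemS n q m_gt0 mK)).
apply: (cboundedN openD).
apply: (cbounded_le (B := \sum_(k < n) `|beta ^+ k.+1| * (cmem_const m B * k.+1%:R ^+ m))
  (leqnn _)).
  apply: le_trans (_ : cmem_const m B * \sum_(k < n) beta ^+ k.+1 * k.+1%:R ^+ m <= _).
    rewrite mulr_sumr; apply: ler_sum => k _.
    by rewrite ger0_norm ?exprn_ge0 ?(ltW beta_gt0) // mulrCA.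
  by rewrite ler_wpM2l ?cmem_const_ge0 ?sum_exprSX_le ?(ltW beta_gt0).
apply: (cbounded_sum openD) => k _; apply: (cboundedZ openD).
rewrite /cmem_const mulr_suml; apply: (cbounded_sum openD) => i _.
rewrite mulr_suml; apply: (cbounded_sum openD) => kk Kk.
apply: cbounded_cmem_term => //; first by rewrite -ltnS.
exact: ltn_ord.
Qed.

Lemma cbounded_phistS m B : (m.+1 <= K)%N -> 0 <= B ->
  cmem_bounded m.+1 B -> phist_bounded m B ->
  forall n a, (0 < a <= n)%N -> forall q,
    cbounded D (N - m.+1) (phist_const m B * a%:R ^+ m.+1) (coordf (phist beta L m.+1 n a) q).
Proof.
move=> mK B0 HC HP n a /andP[a_gt0 an] q.
apply: (eq_in_cbounded openD (coord_phistS n a q mK HC)); apply: (cboundedN openD).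
apply: (cbounded_le (B := \sum_(s < a) phist_const m B * s.+1%:R ^+ m) (leqnn _)).
  rewrite -mulr_sumr exprS ler_wpM2l ?phist_const_ge0 //.
  apply: le_trans (_ : \sum_(s < a) a%:R ^+ m <= _); last first.
    by rewrite sumr_const card_ord mulr_natl.
  by apply: ler_sum => s _; apply: lerXn2r; rewrite ?nnegrE ?ler0n ?ler_nat.
apply: (cbounded_sum openD) => s _; have sn : (0 < s.+1 <= n)%N.
  by rewrite /=; exact: leq_trans (ltn_ord s) an.
rewrite /phist_const mulr_suml; apply: (cbounded_sum openD) => j _.
rewrite mulr_suml; apply: (cbounded_sum openD) => i _.
rewrite mulr_suml; apply: (cbounded_sum openD) => kk Kk.
by apply: cbounded_phist_term => //; rewrite -ltnS ltn_ord.
Qed.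

Lemma cbounded_stage m : (m <= K)%N ->
  cmem_bounded m (stage_const m) /\ phist_bounded m (stage_const m).
Proof.
elim: m => [|m IH] mK; first by split=> -[].
have [HC HP] := IH (ltnW mK); set B := stage_const m.
pose Bc := if m == 0%N then M0 * moment_const beta 0
           else cmem_const m B * moment_const beta m.
have HCnew n q : cbounded D (N - m.+1) Bc (coordf (cmem beta L m.+1 n) q).
  rewrite /Bc; case: eqP => [->|/eqP m_ne0]; first exact: cbounded_cmem1.
  by apply: cbounded_cmemS; rewrite ?lt0n // stage_const_ge0.
set B1 := Num.max B Bc.
have B0 : 0 <= B := stage_const_ge0 m; have BB1 : B <= B1 by rewrite le_max lexx.
have HC1 : cmem_bounded m.+1 B1.
  apply: cmem_boundedS (cmem_bounded_le BB1 HC) _ => n q.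
  by apply: cbounded_le (leqnn _) _ (HCnew n q); rewrite le_max lexx orbT.
have HP1 : phist_bounded m B1 := phist_bounded_le BB1 HP.
have HPnew := cbounded_phistS mK (le_trans B0 BB1) HC1 HP1.
have B1B : B1 <= stage_const m.+1 by rewrite /= le_max lexx.
split; first exact: cmem_bounded_le B1B HC1.
apply: phist_boundedS (phist_bounded_le B1B HP1) _ => n a an q.
apply: cbounded_le (leqnn _) _ (HPnew n a an q).
by rewrite ler_wpM2r ?exprn_ge0 //= le_max lexx orbT.
Qed.

End Bounds.

Unset Implicit Arguments.
Set Strict Implicit.

Theorem mainTheorem3 (R : realType) (beta : R) (K d : nat) (M : R) :
  0 < beta < 1 -> (2 <= K)%N ->
  exists C : R,
  forall (D : set 'rV[R]_d) (L : nat -> 'rV[R]_d -> R),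
    open D -> convexD D ->
    (forall s, CkOn (2 * K) D (L s)) ->
    (forall (s k : nat), (1 <= k <= 2 * K)%N ->
       forall theta, D theta ->
       forall us : seq 'rV[R]_d, seq.size us = k ->
         (forall u, u \in us -> enorm u <= 1) ->
         `|dirDer us (L s) theta| <= M) ->
    forall theta, D theta ->
    forall m r : nat, (1 <= m <= K)%N -> (r <= 2 * K - m)%N ->
      (forall (n : nat) (us : seq 'rV[R]_d), seq.size us = r ->
         (forall u, u \in us -> enorm u <= 1) ->
         enorm (dirDer us (cmem beta L m n) theta) <= C) /\
      (forall (n a : nat) (us : seq 'rV[R]_d), (1 <= a <= n)%N ->
         seq.size us = r ->
         (forall u, u \in us -> enorm u <= 1) ->
         enorm (dirDer us (phist beta L m n a) theta) <= C * (a%:R) ^+ m).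
Proof.
move=> /andP[beta_gt0 beta_lt1] K_ge2; exists (d%:R * stage_const beta K d M K).
move=> D L openD _ smoothL boundL theta Dtheta m r mK rm.
have [HC HP] := cbounded_stage beta_gt0 beta_lt1 K_ge2 openD smoothL boundL (leqnn K).
split=> [n us usr uu|n a us an usr uu].
  apply: (enorm_dirDer_le openD _ Dtheta usr uu) => q.
  exact: cbounded_le rm (lexx _) (HC m mK n q).
rewrite -mulrA; apply: (enorm_dirDer_le openD _ Dtheta usr uu) => q.
exact: cbounded_le rm (lexx _) (HP m mK n a an q).
Qed.
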